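(* There are continuum many pairwise-incomparable (with respect to inclusion) modal clones with respect to $\mathbf{K}$. Consequently, not every modal clone with respect to $\mathbf{K}$ is finitely generated.
   Context: Modal formulas: $\phi::=x\mid\neg\phi\mid\phi\land\psi\mid\phi\lor\psi\mid\Diamond\phi\mid\Box\phi$ over a countably infinite set of variables. $\mathbf{K}$ is the minimal normal modal logic. The Lindenbaum–Tarski algebra of $\mathbf{K}$ has universe $A_{\mathbf{K}}=\{[\phi]\mid\phi \text{ a modal formula}\}$ where $[\phi]$ is the class of formulas $\psi$ with $\mathbf{K}\vdash\phi\leftrightarrow\psi$, with operations $\land,\lor,\neg,\top,\bot,\Diamond$ induced by the connectives. A clone over a set $A$ is a set of finitary operations $A^n\to A$ ($n\ge1$) containing all projections and closed under composition; the clone generated by a set of operations is the smallest clone containing it (constants being treated as constant unary operations). A modal clone with respect to $\mathbf{K}$ is any clone over $A_{\mathbf{K}}$ contained in the clone generated by the operations of the Lindenbaum–Tarski algebra of $\mathbf{K}$. A clone is finitely generated if it is the clone generated by a finite set of operations. *)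

From Stdlib Require Import ClassicalEpsilon List.
From mathcomp Require Import all_boot.

Unset Strict Implicit.
Unset Printing Implicit Defensive.

Inductive form : Type :=
  | Var of nat
  | Neg of form
  | And of form & form
  | Or of form & form
  | Dia of form
  | Box of form.

Definition Imp (p q : form) : form := Or (Neg p) q.
Definition Iff (p q : form) : form := And (Imp p q) (Imp q p).

(* A (propositional) tautology: true under every boolean valuation of
   all formulas that respects the boolean connectives (modal formulas and
   variables being treated as atoms). *)
Definition boolhom (v : form -> bool) : Prop :=
  forall p q, v (Neg p) = ~~ v p /\ v (And p q) = v p && v q
              /\ v (Or p q) = v p || v q.
Definition tautology (p : form) : Prop :=
  forall v, boolhom v -> v p = true.

Inductive Kprov : form -> Prop :=
  | K_taut p : tautology p -> Kprov p
  | K_axK p q : Kprov (Imp (Box (Imp p q)) (Imp (Box p) (Box q)))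
  | K_dual p : Kprov (Iff (Dia p) (Neg (Box (Neg p))))
  | K_mp p q : Kprov (Imp p q) -> Kprov p -> Kprov q
  | K_nec p : Kprov p -> Kprov (Box p).

Definition cls (p : form) : form -> Prop := fun q => Kprov (Iff p q).
Definition AK : Type := {P : form -> Prop | exists p, P = cls p}.
Definition mkAK (p : form) : AK := exist _ (cls p) (ex_intro _ p erefl).
Definition rep (X : AK) : form :=
  proj1_sig (constructive_indefinite_description _ (proj2_sig X)).

(* an operation of arity n.+1 (arities are >= 1) *)
Definition op (A : Type) (n : nat) : Type := ('I_n.+1 -> A) -> A.
Definition opset (A : Type) : Type := forall n, op A n -> Prop.

Definition is_clone {A : Type} (C : opset A) : Prop :=
  (forall n (i : 'I_n.+1), C n (fun x => x i)) /\
  (forall n m (f : op A n) (g : 'I_n.+1 -> op A m),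
      C n f -> (forall i, C m (g i)) -> C m (fun x => f (fun i => g i x))).

Definition subops {A : Type} (C D : opset A) : Prop :=
  forall n f, C n f -> D n f.

Definition gen {A : Type} (S : opset A) : opset A :=
  fun n f => forall C : opset A, is_clone C -> subops S C -> C n f.

Definition set_of_list {A : Type} (l : list {n : nat & op A n}) : opset A :=
  fun n f => In (existT (fun k => op A k) n f) l.

Definition finitely_generated {A : Type} (C : opset A) : Prop :=
  exists l : list {m : nat & op A m}, forall k g, C k g <-> gen (set_of_list l) k g.

Definition negK : op AK 0 := fun x => mkAK (Neg (rep (x ord0))).
Definition diaK : op AK 0 := fun x => mkAK (Dia (rep (x ord0))).
Definition andK : op AK 1 :=
  fun x => mkAK (And (rep (x ord0)) (rep (x ord_max))).
Definition orK : op AK 1 :=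
  fun x => mkAK (Or (rep (x ord0)) (rep (x ord_max))).
(* constants as constant unary operations: top = [x0 \/ ~x0], bot = [x0 /\ ~x0] *)
Definition topK : op AK 0 := fun _ => mkAK (Or (Var 0) (Neg (Var 0))).
Definition botK : op AK 0 := fun _ => mkAK (And (Var 0) (Neg (Var 0))).

Definition LT_ops : list {n : nat & op AK n} :=
  [:: existT (fun k => op AK k) 1 andK; existT (fun k => op AK k) 1 orK;
      existT (fun k => op AK k) 0 negK; existT (fun k => op AK k) 0 topK;
      existT (fun k => op AK k) 0 botK; existT (fun k => op AK k) 0 diaK].

Definition modal_clone (C : opset AK) : Prop :=
  is_clone C /\ subops C (gen (set_of_list LT_ops)).

From Stdlib Require Import ClassicalEpsilon List.
From Stdlib Require Import Classical FunctionalExtensionality.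
From mathcomp Require Import all_boot.

(* Evaluate the Lindenbaum-Tarski algebra of K in the Kripke chain
   0 -> 1 -> ... -> N with every variable false.  The unary term operation
   x \/ (<>^m T /\ ~ <>^(m+1) T) preserves the set of classes refuted at the
   root of the N-chain exactly when m <> N, and the operations preserving a
   fixed set form a clone.  So if N lies in I but not in J, the clone generated
   by the operations indexed by J misses the one indexed by N; coding
   s : nat -> bool as the set {s j + 2 j | j} gives continuum many pairwise
   incomparable clones.  The clone generated by all these operations is not
   finitely generated: finitely many of its members preserve refutation at the
   root of the N-chain for all large N, yet it contains the operation indexed
   by every N. *)

Section Clones.

Context {A : Type}.

Lemma gen_is_clone (S : opset A) : is_clone (gen S).
Proof.
split=> [n i C [HC _] _ | n m f h Hf Hh C HC HS]; first exact: HC.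
by apply: (proj2 HC) => [|i]; [exact: Hf | exact: Hh].
Qed.

Lemma gen_min (S D : opset A) : is_clone D -> subops S D -> subops (gen S) D.
Proof. by move=> HD HS n f; apply. Qed.

Lemma sub_gen (S : opset A) : subops S (gen S).
Proof. by move=> n f Hf C _; apply. Qed.

Definition compose1 {m} (f : op A 0) (h : op A m) : op A m :=
  fun x => f (fun=> h x).

Definition compose2 {m} (f : op A 1) (h1 h2 : op A m) : op A m :=
  fun x => f (fun i => (if i == ord0 then h1 else h2) x).

Lemma clone_compose1 (C : opset A) m f (h : op A m) :
  is_clone C -> C 0 f -> C m h -> C m (compose1 f h).
Proof. by move=> HC Hf Hh; apply: (proj2 HC 0 m f (fun=> h)). Qed.

Lemma clone_compose2 (C : opset A) m f (h1 h2 : op A m) :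
  is_clone C -> C 1 f -> C m h1 -> C m h2 -> C m (compose2 f h1 h2).
Proof.
move=> HC Hf Hh1 Hh2.
by apply: (proj2 HC 1 m f (fun i => if i == ord0 then h1 else h2)) => // i; case: ifP.
Qed.

Definition preserving (R : A -> Prop) : opset A :=
  fun n f => forall x, (forall i, R (x i)) -> R (f x).

Lemma preserving_clone R : is_clone (preserving R).
Proof.
split=> [n i x | n m f h Hf Hh x Hx]; first exact.
by apply: Hf => i; apply: Hh.
Qed.

End Clones.

Definition eventually (P : nat -> Prop) : Prop := exists M, forall N, M <= N -> P N.

Lemma eventually_and {P Q : nat -> Prop} :
  eventually P -> eventually Q -> eventually (fun N => P N /\ Q N).
Proof.
move=> [M HM] [M' HM']; exists (maxn M M') => N; rewrite geq_max => /andP[? ?].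
by split; [apply: HM | apply: HM'].
Qed.

Lemma eventually_all_in {T : Type} (s : list T) (P : T -> nat -> Prop) :
  (forall x, In x s -> eventually (P x)) ->
  eventually (fun N => forall x, In x s -> P x N).
Proof.
elim: s => [|y s IH] Hs; first by exists 0.
have [M HM] := eventually_and (Hs y (or_introl erefl))
                                (IH (fun x Hx => Hs x (or_intror Hx))).
by exists M => N /HM[Hy Hs'] x [<-|/Hs'].
Qed.

Lemma In_enum {T : finType} (x : T) : In x (enum T).
Proof.
have : x \in enum T by rewrite mem_enum.
by elim: (enum T) => //= y s IH; rewrite inE => /orP[/eqP ->|/IH]; [left|right].
Qed.

Section EventualClones.

Context {A : Type} (D : nat -> opset A).
Hypothesis D_clone : forall N, is_clone (D N).

Definition eventually_in : opset A := fun n f => eventually (fun N => D N n f).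

Lemma eventually_in_clone : is_clone eventually_in.
Proof.
split=> [n i | n m f h [M HM] Hh].
  by exists 0 => N _; apply: (proj1 (D_clone N)).
have [M' HM'] := eventually_all_in (enum 'I_n.+1) (fun i N => D N m (h i))
                                   (fun i _ => Hh i).
have [M'' HM''] := eventually_and (ex_intro _ M HM) (ex_intro _ M' HM').
exists M'' => N /HM''[Hf Hh']; apply: (proj2 (D_clone N)) => // i.
exact: Hh' (In_enum i).
Qed.

Lemma finitely_generated_eventually_in (C : opset A) :
  finitely_generated C -> subops C eventually_in -> exists M, subops C (D M).
Proof.
move=> [l Hl] HC.
have [M HM] : eventually (fun N => forall x, In x l -> D N (projT1 x) (projT2 x)).
  by apply: eventually_all_in => -[k f] Hx; apply/HC/Hl; apply: sub_gen.
exists M => k f /Hl; apply: gen_min => // n g Hg.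
exact: (HM M (leqnn M) (existT _ n g) Hg).
Qed.

End EventualClones.

Fixpoint chain_sat (N : nat) (p : form) (w : nat) : bool :=
  match p with
  | Var _ => false
  | Neg q => ~~ chain_sat N q w
  | And q r => chain_sat N q w && chain_sat N r w
  | Or q r => chain_sat N q w || chain_sat N r w
  | Dia q => (w < N) && chain_sat N q w.+1
  | Box q => (w < N) ==> chain_sat N q w.+1
  end.

Lemma Kprov_chain_sat N p : Kprov p -> forall w, chain_sat N p w.
Proof.
elim=> {p} [p Hp w | p q w | p w | p q _ IHpq _ IHp w | p _ IHp w] /=.
- by apply: (Hp (chain_sat N ^~ w)).
- by case: (w < N); case: (chain_sat N p w.+1); case: (chain_sat N q w.+1).
- by case: (w < N); case: (chain_sat N p w.+1).
- by have := IHpq w; rewrite /= IHp.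
- by apply/implyP.
Qed.

Lemma Kprov_Iff_refl p : Kprov (Iff p p).
Proof.
apply: K_taut => v Hv.
have [Hneg _] := Hv p p; have [_ [Hand _]] := Hv (Imp p p) (Imp p p).
have [_ [_ Hor]] := Hv (Neg p) p.
by rewrite /Iff Hand /Imp Hor Hneg; case: (v p).
Qed.

Lemma chain_sat_rep N p w : chain_sat N (rep (mkAK p)) w = chain_sat N p w.
Proof.
rewrite /rep; case: constructive_indefinite_description => r /= Hr.
have : cls p p by apply: Kprov_Iff_refl.
rewrite Hr => /(Kprov_chain_sat N) /(_ w) /=.
by case: (chain_sat N p w); case: (chain_sat N r w).
Qed.

Definition holds (N : nat) (a : AK) (w : nat) : bool := chain_sat N (rep a) w.

Definition refuted (N : nat) (a : AK) : bool := ~~ holds N a 0.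

Definition dia_iter (k : nat) : op AK 0 := iter k (compose1 diaK) topK.
Arguments dia_iter : simpl never.

Definition exact_depth (m : nat) : op AK 0 :=
  compose2 andK (dia_iter m) (compose1 negK (dia_iter m.+1)).

Definition or_depth (m : nat) : op AK 0 :=
  compose2 orK (fun x => x ord0) (exact_depth m).

Lemma holds_topK N x w : holds N (topK x) w.
Proof. by rewrite /holds chain_sat_rep. Qed.

Lemma holds_negK N x w : holds N (negK x) w = ~~ holds N (x ord0) w.
Proof. by rewrite /holds chain_sat_rep. Qed.

Lemma holds_diaK N x w : holds N (diaK x) w = (w < N) && holds N (x ord0) w.+1.
Proof. by rewrite /holds chain_sat_rep. Qed.

Lemma holds_andK N x w :
  holds N (andK x) w = holds N (x ord0) w && holds N (x ord_max) w.
Proof. by rewrite /holds chain_sat_rep. Qed.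

Lemma holds_orK N x w :
  holds N (orK x) w = holds N (x ord0) w || holds N (x ord_max) w.
Proof. by rewrite /holds chain_sat_rep. Qed.

Lemma holds_dia_iter N k x w : w <= N -> holds N (dia_iter k x) w = (w + k <= N).
Proof.
elim: k w => [|k IH] w Hw; first by rewrite holds_topK addn0 Hw.
rewrite /dia_iter iterS -/(dia_iter k) /compose1 holds_diaK.
case: ltnP => Hl; first by rewrite IH // addSnnS.
by apply/esym/negbTE; rewrite -ltnNge addnS ltnS (leq_trans Hl) ?leq_addr.
Qed.

Lemma holds_exact_depth N m x : holds N (exact_depth m x) 0 = (m == N).
Proof.
rewrite /exact_depth /compose2 /compose1 holds_andK holds_negK /=.
by rewrite !holds_dia_iter // -ltnNge eqn_leq ltnS.
Qed.

Lemma holds_or_depth N m x :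
  holds N (or_depth m x) 0 = holds N (x ord0) 0 || (m == N).
Proof. by rewrite /or_depth /compose2 holds_orK /= holds_exact_depth. Qed.

Lemma or_depth_preserving N m : m != N -> preserving (refuted N) 0 (or_depth m).
Proof.
by move=> HmN x /(_ ord0); rewrite /refuted holds_or_depth (negbTE HmN) orbF.
Qed.

Lemma or_depth_not_preserving N : ~ preserving (refuted N) 0 (or_depth N).
Proof.
move=> Hpres.
have Hvar : refuted N (mkAK (Var 0)) by rewrite /refuted /holds chain_sat_rep.
by have := Hpres _ (fun=> Hvar); rewrite /refuted holds_or_depth eqxx orbT.
Qed.

Lemma or_depth_modal m : gen (set_of_list LT_ops) 0 (or_depth m).
Proof.
move=> C HC HS.
have [andC orC negC topC diaC] :
    [/\ C 1 andK, C 1 orK, C 0 negK, C 0 topK & C 0 diaK].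
  by split; apply: HS; rewrite /set_of_list /=; tauto.
have dia_iterC k : C 0 (dia_iter k).
  by elim: k => [|k IH] //; rewrite /dia_iter iterS; apply: clone_compose1.
apply: clone_compose2 => //; first exact: (proj1 HC 0 ord0).
by apply: clone_compose2 => //; apply: clone_compose1.
Qed.

Definition or_depths (I : pred nat) : opset AK := fun k =>
  match k with 0 => fun f => exists2 m, I m & f = or_depth m | _ => fun=> False end.

Lemma gen_or_depths_modal (I : pred nat) : modal_clone (gen (or_depths I)).
Proof.
split; first exact: gen_is_clone.
apply: gen_min => [|[|k] f] //; first exact: gen_is_clone.
by move=> [m _ ->]; apply: or_depth_modal.
Qed.

Lemma gen_or_depths_preserving (I : pred nat) N :
  ~~ I N -> subops (gen (or_depths I)) (preserving (refuted N)).
Proof.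
move=> HIN; apply: gen_min => [|[|k] f] //; first exact: preserving_clone.
move=> [m HIm ->]; apply: or_depth_preserving.
by apply: contraNneq HIN => <-.
Qed.

Lemma gen_or_depths_incomparable (I J : pred nat) N :
  I N -> ~~ J N -> ~ subops (gen (or_depths I)) (gen (or_depths J)).
Proof.
move=> HIN HJN HIJ; apply: (or_depth_not_preserving N).
by apply: (gen_or_depths_preserving _ _ HJN); apply: HIJ; apply: sub_gen; exists N.
Qed.

Lemma gen_or_depths_eventually (I : pred nat) :
  subops (gen (or_depths I)) (eventually_in (fun N => preserving (refuted N))).
Proof.
apply: gen_min => [|[|k] f] //.
  by apply: eventually_in_clone => N; apply: preserving_clone.
move=> [m _ ->]; exists m.+1 => N HmN; apply: or_depth_preserving.
by rewrite neq_ltn HmN.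
Qed.

Lemma gen_all_or_depths_not_finitely_generated :
  ~ finitely_generated (gen (or_depths predT)).
Proof.
move=> Hfg; have [M HM] := finitely_generated_eventually_in
  _ (fun N => preserving_clone (refuted N)) _ Hfg (gen_or_depths_eventually predT).
by apply: (or_depth_not_preserving M); apply: HM; apply: sub_gen; exists M.
Qed.

Definition coded (s : nat -> bool) : pred nat := fun N => odd N == s N./2.

Lemma coded_separates s t : s <> t -> exists2 N, coded s N & ~~ coded t N.
Proof.
move=> Hst; apply: NNPP => Hsep; apply: Hst; apply: functional_extensionality => j.
apply/eqP/negPn/negP => Hj; apply: Hsep; exists (s j + j.*2);
  by rewrite /coded half_bit_double oddD odd_double addbF oddb ?eqxx.
Qed.

Theorem fact4p6 :
  (exists F : (nat -> bool) -> opset AK,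
      (forall s, modal_clone (F s)) /\
      (forall s t, s <> t -> ~ subops (F s) (F t))) /\
  (exists C : opset AK, modal_clone C /\ ~ finitely_generated C).
Proof.
split.
- exists (fun s => gen (or_depths (coded s))).
  split=> [s | s t /coded_separates [N HsN HtN]].
  + exact: gen_or_depths_modal.
  + exact: gen_or_depths_incomparable HsN HtN.
- exists (gen (or_depths predT)); split.
  + exact: gen_or_depths_modal.
  + exact: gen_all_or_depths_not_finitely_generated.
Qed.
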